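(* Let $P$ be a finite poset and let $x$ be a maximal element or a minimal element of $P$. Then the toggleability statistic $\mathfrak{T}_x$ is $0$-mesic under rowmotion on $\mathcal{IC}(P)$, i.e. its average over every rowmotion orbit is $0$.
   Context: All posets are finite. For a poset $P$, a subset $I\subseteq P$ is interval-closed if for all $x,y\in I$ and $z\in P$ with $x\le z\le y$ we have $z\in I$; $\mathcal{IC}(P)$ is the set of interval-closed subsets of $P$. For $x\in P$ the toggle $t_x:\mathcal{IC}(P)\to\mathcal{IC}(P)$ is defined by $t_x(I)=I\triangle\{x\}$ if $I\triangle\{x\}\in\mathcal{IC}(P)$ and $t_x(I)=I$ otherwise. Rowmotion is $\mathrm{Row}=t_{x_1}\circ t_{x_2}\circ\cdots\circ t_{x_N}:\mathcal{IC}(P)\to\mathcal{IC}(P)$, where $(x_1,\dots,x_N)$ is a linear extension of $P$ (so elements are toggled from the top of the poset down); this does not depend on the choice of linear extension. The toggleability statistic $\mathfrak{T}_x:\mathcal{IC}(P)\to\{-1,0,1\}$ is $\mathfrak{T}_x(I)=1$ if $x\notin I$ and $I\cup\{x\}\in\mathcal{IC}(P)$; $\mathfrak{T}_x(I)=-1$ if $x\in I$ and $I-\{x\}\in\mathcal{IC}(P)$; and $0$ otherwise. A statistic is $c$-mesic under rowmotion if its average over each rowmotion orbit equals $c$. *)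

From mathcomp Require Import all_boot all_order all_algebra.
Set Implicit Arguments. Unset Strict Implicit. Unset Printing Implicit Defensive.
Import Order.Theory GRing.Theory.

Section IC.
Context {disp : Order.disp_t} {P : finPOrderType disp}.
Local Open Scope order_scope.

Definition interval_closed (I : {set P}) : bool :=
  [forall x, forall y, forall z,
     [&& x \in I, y \in I, x <= z & z <= y] ==> (z \in I)].

Definition symdiff1 (I : {set P}) (x : P) : {set P} :=
  (I :\: [set x]) :|: ([set x] :\: I).

Definition toggle (x : P) (I : {set P}) : {set P} :=
  if interval_closed (symdiff1 I x) then symdiff1 I x else I.

Definition linear_extension (s : seq P) : Prop :=
  [/\ uniq s, (forall x, x \in s) &
      (forall x y, x < y -> (index x s < index y s)%N)].

(* Row = t_{x1} o t_{x2} o ... o t_{xN} for s = [:: x1; ...; xN]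
   (t_{xN} is applied first) *)
Definition rowmotion (s : seq P) (I : {set P}) : {set P} :=
  foldr toggle I s.

Definition toggleability (x : P) (I : {set P}) : int :=
  if (x \notin I) && interval_closed (x |: I) then 1%R
  else if (x \in I) && interval_closed (I :\ x) then (-1)%R
  else 0%R.

Definition maximal (x : P) : bool := [forall y, ~~ (x < y)].
Definition minimal (x : P) : bool := [forall y, ~~ (y < x)].

Definition orbit_average (s : seq P) (f : {set P} -> int) (I : {set P}) : rat :=
  ((\sum_(J <- orbit (rowmotion s) I) f J)%:~R / (size (orbit (rowmotion s) I))%:R)%R.

Definition mesic (s : seq P) (f : {set P} -> int) (c : rat) : Prop :=
  forall I, interval_closed I -> orbit_average s f I = c.
End IC.

From mathcomp Require Import all_boot all_order all_algebra.
Set Implicit Arguments. Unset Strict Implicit. Unset Printing Implicit Defensive.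
Import Order.Theory GRing.Theory.

(* Write [x in I] for the 0/1 indicator of x in I.  For every set I one has
   T_x(I) = [x in t_x I] - [x in I], and for interval-closed I also
   T_x(t_x I) = - T_x(I).  Moreover T_x(I) only depends on the elements of I
   comparable with x.  Split the linear extension as s1 ++ x :: s2: rowmotion
   toggles s2 (nothing below x) first, then x, then s1 (nothing above x).
   - If x is maximal, everything comparable with x lies below x, so it is not
     touched before x is toggled; hence T_x(I) = [x in Row I] - [x in I].
   - If x is minimal, everything comparable with x lies above x, so it is not
     touched after x is toggled; hence T_x(Row I) = [x in I] - [x in Row I].
   In both cases the orbit sum of T_x telescopes to 0, because summing
   h (Row J) or h J over a rowmotion orbit gives the same result (rowmotion is
   injective on interval-closed sets, so orbits are cycles). *)

Section OrbitSums.
Variables (T : finType) (f : T -> T) (S : {pred T}).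
Hypotheses (f_S : {homo f : y / y \in S}) (f_inj : {in S &, injective f}).

Lemma orbit_sub x : x \in S -> {subset orbit f x <= S}.
Proof. by move=> xS _ /trajectP[i _ ->]; apply: iter_in. Qed.

(* If f is injective on S, the orbit of x in S is an f-cycle, so summing
   h \o f or h over it gives the same value. *)
Lemma orbit_sum_shift (V : nmodType) (h : T -> V) x : x \in S ->
  (\sum_(y <- orbit f x) h (f y) = \sum_(y <- orbit f x) h y)%R.
Proof.
move=> xS; have f_traject n z : map f (traject f z n) = traject f (f z) n.
  by elim: n z => //= n IHn z; rewrite IHn.
have [m order_x] : exists m, order f x = m.+1.
  by exists (order f x).-1; rewrite prednK ?order_gt0.
rewrite -(big_map f xpredT) /orbit f_traject order_x.
rewrite [in LHS]trajectSr [in RHS]trajectS -iterSr -order_x.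
by rewrite (iter_order_in f_S f_inj xS); apply: perm_big; rewrite perm_rcons.
Qed.
End OrbitSums.

Section IntervalClosed.
Context {disp : Order.disp_t} {P : finPOrderType disp}.
Local Open Scope order_scope.
Implicit Types (I J : {set P}) (x : P).

Lemma interval_closedP I :
  reflect (forall a b z, a \in I -> b \in I -> a <= z -> z <= b -> z \in I)
          (interval_closed I).
Proof.
apply: (iffP forallP) => [closedI a b z aI bI az zb | closedI a].
  by move/forallP: (closedI a) => /(_ b)/forallP/(_ z); rewrite aI bI az zb; apply.
apply/forallP => b; apply/forallP => z; apply/implyP => /and4P[aI bI az zb].
exact: closedI aI bI az zb.
Qed.

Definition addable x I : bool :=
  [forall a, forall z, [&& a \in I, a < z & z < x] ==> (z \in I)] &&
  [forall b, forall z, [&& b \in I, x < z & z < b] ==> (z \in I)].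

Definition removable x I : bool :=
  ~~ [exists a, exists b, [&& a \in I, b \in I, a < x & x < b]].

Lemma interval_closed_setU1 I x : interval_closed I -> x \notin I ->
  interval_closed (x |: I) = addable x I.
Proof.
move=> /interval_closedP closedI xNI; apply/idP/andP.
  move=> /interval_closedP closedIx; split.
    apply/forallP => a; apply/forallP => z; apply/implyP => /and3P[aI az zx].
    have := closedIx a x z; rewrite !inE eqxx aI orbT !ltW //.
    by rewrite (lt_eqF zx) => /(_ isT isT isT isT).
  apply/forallP => b; apply/forallP => z; apply/implyP => /and3P[bI xz zb].
  have := closedIx x b z; rewrite !inE eqxx bI orbT !ltW //.
  by rewrite (gt_eqF xz) => /(_ isT isT isT isT).
move=> [/forallP below /forallP above]; apply/interval_closedP => a b z.
rewrite !inE => /predU1P[-> | aI] /predU1P[-> | bI] az zb.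
- have -> : z = x by apply/le_anti; rewrite zb az.
  by rewrite eqxx.
- case: (eqVneq z x) => //= zx; case: (eqVneq z b) => [-> // | zb'].
  by have := forallP (above b) z; rewrite bI !lt_neqAle eq_sym zx az zb' zb; apply.
- case: (eqVneq z x) => //= zx; case: (eqVneq a z) => [<- // | az'].
  by have := forallP (below a) z; rewrite aI !lt_neqAle az' zx az zb; apply.
- by rewrite (closedI a b z) ?orbT.
Qed.

Lemma interval_closed_setD1 I x : interval_closed I -> x \in I ->
  interval_closed (I :\ x) = removable x I.
Proof.
move=> /interval_closedP closedI xI; apply/idP/idP.
  move=> /interval_closedP closedIx; apply/existsPn => a; apply/existsPn => b.
  apply/negP => /and4P[aI bI ax xb].
  have := closedIx a b x; rewrite !inE eqxx (lt_eqF ax) (gt_eqF xb) aI bI !ltW //.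
  by move=> /(_ isT isT isT isT).
move=> /existsPn noTrap; apply/interval_closedP => a b z.
rewrite !inE => /andP[ax aI] /andP[bx bI] az zb; rewrite (closedI a b z) // andbT.
apply/eqP => zx; move: az zb; rewrite zx => az xb.
by have := existsPn (noTrap a) b; rewrite aI bI !lt_neqAle ax eq_sym bx az xb.
Qed.

Lemma comparable_maximal x z : maximal x -> x >=< z -> z <= x.
Proof.
move=> /forallP max_x /orP[xz | //]; move: xz.
by rewrite le_eqVlt (negPf (max_x z)) orbF => /eqP->.
Qed.

Lemma comparable_minimal x z : minimal x -> x >=< z -> x <= z.
Proof.
move=> /forallP min_x /orP[// | zx]; move: zx.
by rewrite le_eqVlt (negPf (min_x z)) orbF => /eqP->.
Qed.

(* Locality: on interval-closed sets, T_x only sees the elements comparable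
   with x, since addability and removability of x only involve those. *)
Lemma toggleability_local x I J : interval_closed I -> interval_closed J ->
  (forall z, x >=< z -> (z \in I) = (z \in J)) ->
  toggleability x I = toggleability x J.
Proof.
move=> closedI closedJ agree.
have agree_lt z : (z < x) || (x < z) -> (z \in I) = (z \in J).
  by case/orP=> [/ltW/ge_comparable | /ltW/le_comparable]; apply: agree.
have x_IJ : (x \in I) = (x \in J) by apply: agree; rewrite comparablexx.
rewrite /toggleability -x_IJ; case: (boolP (x \in I)) => xI /=.
  rewrite !interval_closed_setD1 -?x_IJ //; congr (if ~~ _ then _ else _).
  apply: eq_existsb => a; apply: eq_existsb => b.
  case: (boolP (a < x)) => ax; case: (boolP (x < b)) => xb; rewrite ?andbF //.
  by rewrite !agree_lt ?ax ?xb ?orbT.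
rewrite !interval_closed_setU1 -?x_IJ //; congr (if _ then _ else _).
congr (_ && _); apply: eq_forallb => a; apply: eq_forallb => z.
  case: (boolP (a < z)) => az; case: (boolP (z < x)) => zx; rewrite ?andbF //.
  by rewrite !agree_lt ?zx ?(lt_trans az zx).
case: (boolP (x < z)) => xz; case: (boolP (z < a)) => za; rewrite ?andbF //.
by rewrite !agree_lt ?xz ?(lt_trans xz za) ?orbT.
Qed.
End IntervalClosed.

Section Toggles.
Context {disp : Order.disp_t} {P : finPOrderType disp}.
Local Open Scope order_scope.
Implicit Types (I J : {set P}) (x z : P) (s : seq P).

Definition membership x I : int := if x \in I then 1%R else 0%R.

Lemma symdiff1E I x : symdiff1 I x = if x \in I then I :\ x else x |: I.
Proof.
apply/setP => z; rewrite /symdiff1; case: ifP => xI; rewrite !inE;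
  case: (eqVneq z x) => [->|] //=; rewrite ?xI ?andbF ?orbF //.
Qed.

Lemma symdiff1K I x : symdiff1 (symdiff1 I x) x = I.
Proof.
rewrite [symdiff1 I x]symdiff1E; case: ifP => xI; rewrite symdiff1E !inE eqxx /=.
  by rewrite setD1K.
by rewrite setU1K ?xI.
Qed.

Lemma toggleabilityE x I : toggleability x I =
  if interval_closed (symdiff1 I x) then (if x \in I then -1 else 1)%R else 0%R.
Proof. by rewrite /toggleability symdiff1E; case: (x \in I). Qed.

Lemma toggleability_membership x I :
  toggleability x I = (membership x (toggle x I) - membership x I)%R.
Proof.
rewrite toggleabilityE /toggle /membership; case: ifP => _; last by rewrite subrr.
by rewrite symdiff1E; case: (x \in I); rewrite !inE eqxx.
Qed.

(* A performed toggle can be undone, so the toggleability flips sign. *)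
Lemma toggleability_toggle x I : interval_closed I ->
  toggleability x (toggle x I) = (- toggleability x I)%R.
Proof.
move=> closedI; rewrite /toggle; case: ifP => closedS; rewrite !toggleabilityE.
  by rewrite symdiff1K closedI closedS symdiff1E; case: (x \in I); rewrite !inE eqxx.
by rewrite closedS oppr0.
Qed.

Lemma toggle_closed x I : interval_closed I -> interval_closed (toggle x I).
Proof. by rewrite /toggle; case: ifP. Qed.

Lemma foldr_toggle_closed s I :
  interval_closed I -> interval_closed (foldr toggle I s).
Proof. by elim: s => //= y s IHs /IHs; apply: toggle_closed. Qed.

Lemma toggleK x I : interval_closed I -> toggle x (toggle x I) = I.
Proof.
move=> closedI; rewrite [toggle x I]/toggle; case: ifP => closedS.
  by rewrite /toggle symdiff1K closedI.
by rewrite /toggle closedS.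
Qed.

Lemma mem_toggle x I z : z != x -> (z \in toggle x I) = (z \in I).
Proof.
move=> zx; rewrite /toggle; case: ifP => // _.
by rewrite symdiff1E; case: ifP; rewrite !inE (negPf zx).
Qed.

Lemma mem_foldr_toggle s I z : z \notin s -> (z \in foldr toggle I s) = (z \in I).
Proof.
elim: s => //= y s IHs; rewrite inE negb_or => /andP[zy zs].
by rewrite mem_toggle // IHs.
Qed.

(* Rowmotion is injective on interval-closed sets (a composite of involutions). *)
Lemma rowmotion_inj s :
  {in [pred I | interval_closed I] &, injective (rowmotion s)}.
Proof.
move=> I J; rewrite !inE /rowmotion => closedI closedJ.
elim: s => //= y s IHs eq_toggled; apply: IHs.
rewrite -(toggleK y (foldr_toggle_closed s closedI)) eq_toggled.
by rewrite toggleK // foldr_toggle_closed.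
Qed.

Lemma linear_extension_split s1 x s2 : linear_extension (s1 ++ x :: s2) ->
  {in s2, forall z, ~~ (z <= x)} /\ {in s1, forall z, ~~ (x <= z)}.
Proof.
case=> uniq_s _ ordered; move: uniq_s; rewrite cat_uniq /= negb_or.
case/and4P=> _ /andP[xNs1 disjoint] xNs2 _.
have index_x : index x (s1 ++ x :: s2) = size s1.
  by rewrite index_cat (negPf xNs1) /= eqxx addn0.
split=> z zs; rewrite le_eqVlt negb_or; apply/andP; split.
- by apply: contraNneq xNs2 => <-.
- apply/negP => /ordered; rewrite index_x index_cat.
  have -> : (z \in s1) = false by apply: contraNF disjoint => zs1; apply/hasP; exists z.
  by rewrite ltnNge leq_addr.
- by apply: contraNneq xNs1 => ->.
- by apply/negP => /ordered; rewrite index_x index_cat zs ltnNge ltnW // index_mem.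
Qed.
End Toggles.

Section RowmotionIdentities.
Context {disp : Order.disp_t} {P : finPOrderType disp}.
Variables (s : seq P) (x : P).
Hypothesis ext_s : linear_extension s.

(* For maximal x, the toggle at x is decided on the original set I. *)
Lemma toggleability_maximal I : maximal x -> interval_closed I ->
  toggleability x I = (membership x (rowmotion s I) - membership x I)%R.
Proof.
move=> max_x closedI; have [_ s_x _] := ext_s.
case/splitPr: (s_x x) ext_s => s1 s2 /linear_extension_split[notBelow notAbove].
have xNs1 : x \notin s1 := contraL (notAbove x) (lexx x).
have xNs2 : x \notin s2 := contraL (notBelow x) (lexx x).
pose J := foldr toggle I s2.
have -> : toggleability x I = toggleability x J.
  apply: toggleability_local => // [|z xz]; first exact: foldr_toggle_closed.
  by rewrite mem_foldr_toggle // (contraL (notBelow z) (comparable_maximal max_x xz)).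
rewrite toggleability_membership /rowmotion foldr_cat /= /membership.
by rewrite mem_foldr_toggle // [x \in J]mem_foldr_toggle.
Qed.

(* For minimal x, the toggle at x is seen unchanged in Row I. *)
Lemma toggleability_minimal I : minimal x -> interval_closed I ->
  toggleability x (rowmotion s I) = (membership x I - membership x (rowmotion s I))%R.
Proof.
move=> min_x closedI; have [_ s_x _] := ext_s.
case/splitPr: (s_x x) ext_s => s1 s2 /linear_extension_split[notBelow notAbove].
have xNs1 : x \notin s1 := contraL (notAbove x) (lexx x).
have xNs2 : x \notin s2 := contraL (notBelow x) (lexx x).
pose J := foldr toggle I s2; pose K := toggle x J.
have closedJ : interval_closed J by exact: foldr_toggle_closed.
have closedK : interval_closed K by exact: toggle_closed.
rewrite /rowmotion foldr_cat /= -/J -/K.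
have -> : toggleability x (foldr toggle K s1) = toggleability x K.
  apply: toggleability_local => // [|z xz]; first exact: foldr_toggle_closed.
  by rewrite mem_foldr_toggle // (contraL (notAbove z) (comparable_minimal min_x xz)).
rewrite toggleability_toggle // toggleability_membership opprB /membership.
by rewrite mem_foldr_toggle // [x \in J]mem_foldr_toggle.
Qed.
End RowmotionIdentities.

Theorem proposition2p19 (disp : Order.disp_t) (P : finPOrderType disp)
  (s : seq P) (x : P) :
  linear_extension s -> (maximal x || minimal x) ->
  mesic s (toggleability x) 0%R.
Proof.
move=> ext_s max_or_min I closedI; rewrite /orbit_average.
pose closed := [pred J : {set P} | interval_closed J].
have row_closed : {homo rowmotion s : J / J \in closed}.
  by move=> J; rewrite !inE; apply: foldr_toggle_closed.
have I_closed : I \in closed by [].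
have shift := orbit_sum_shift row_closed (@rowmotion_inj _ _ s) _ I_closed.
have orbit_closed := orbit_sub row_closed I_closed.
suff -> : (\sum_(J <- orbit (rowmotion s) I) toggleability x J = 0)%R.
  by rewrite mul0r.
case/orP: max_or_min => [max_x | min_x].
  rewrite (eq_big_seq (fun J => membership x (rowmotion s J) - membership x J)%R).
    by rewrite sumrB shift subrr.
  by move=> J /orbit_closed; apply: toggleability_maximal.
rewrite -shift (eq_big_seq (fun J => membership x J - membership x (rowmotion s J))%R).
  by rewrite sumrB shift subrr.
by move=> J /orbit_closed; apply: toggleability_minimal.
Qed.
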